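(* For each $a\in S^A$, let $P^A_a=\sum_{\alpha\in\Omega^A}P^A_{f_a(\alpha)}$ and $K^{A'}_a=\sqrt{P^A_a}\otimes|a\rangle_{\tilde A}$. Define $$\mathcal G'(\sigma)=V\Pi\Big(\sum_{a\in S^A,b\in S^B}(K^{A'}_a\otimes K^B_b)\sigma(K^{A'}_a\otimes K^B_b)^\dagger\Big)\Pi V^\dagger,$$ which is $\mathcal G$ with the register $\bar A$ omitted. Then for every density operator $\rho_{AB}$ on $H_A\otimes H_B$, $$D\big(\mathcal G(\rho_{AB})\,\|\,\mathcal Z[\mathcal G(\rho_{AB})]\big)=D\big(\mathcal G'(\rho_{AB})\,\|\,\mathcal Z[\mathcal G'(\rho_{AB})]\big).$$
   Context: Setting (reverse-reconciliation postprocessing). Registers and measurements. $H_A,H_B$ are finite-dimensional Hilbert spaces. Alice has a POVM $\{P^A_x\}_{x\in\mathcal X}$ on $H_A$, and Bob has a POVM $\{P^B_y\}_{y\in\mathcal Y}$ on $H_B$. Alice's announcement set $S^A$ gives a partition $\mathcal X=\bigcup_{a\in S^A}\mathcal X_a$ with $|\mathcal X_a|=\omega_A$ for all $a$. Bob's announcement set $S^B$ gives a partition $\mathcal Y=\bigcup_{b\in S^B}\mathcal Y_b$ with $|\mathcal Y_b|=\omega_B$ for all $b$. Fix bijections $f_a:\Omega^A=\{1,\dots,\omega_A\}\to\mathcal X_a$ and $f_b:\Omega^B=\{1,\dots,\omega_B\}\to\mathcal Y_b$. The registers $\tilde A,\tilde B,\bar A,\bar B$ have orthonormal bases $\{|a\rangle\}_{a\in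 S^A}$, $\{|b\rangle\}_{b\in S^B}$, $\{|\alpha\rangle\}_{\alpha\in\Omega^A}$ and $\{|\beta\rangle\}_{\beta\in\Omega^B}$ respectively. Announcement map. Define $$K^A_a=\sum_{\alpha\in\Omega^A}\sqrt{P^A_{f_a(\alpha)}}\otimes|a\rangle_{\tilde A}\otimes|\alpha\rangle_{\bar A},\qquad K^B_b=\sum_{\beta\in\Omega^B}\sqrt{P^B_{f_b(\beta)}}\otimes|b\rangle_{\tilde B}\otimes|\beta\rangle_{\bar B},$$ and $\mathcal A(\sigma)=\sum_{a\in S^A,b\in S^B}(K^A_a\otimes K^B_b)\sigma(K^A_a\otimes K^B_b)^\dagger$. Sifting. Fix a subset $\mathbf K\subseteq S^A\times S^B$ of kept announcements and let $\Pi=\sum_{(a,b)\in\mathbf K}|a\rangle\langle a|_{\tilde A}\otimes|b\rangle\langle b|_{\tilde B}$. Key map. Fix a key map $g:\mathbf K\times\mathcal Y\to\{0,\dots,N-1\}$, which does not depend on Alice's outcome (reverse reconciliation). The register $R$ has orthonormal basis $\{|j\rangle\}_{j=0}^{N-1}$. Define $$V=\sum_{(a,b)\in\mathbf K,\ \beta\in\Omega^B}|g(a,b,f_b(\beta))\rangle_R\otimes|a\rangle\langle a|_{\tilde A}\otimes|b\rangle\langle b|_{\tilde B}\otimes|\beta\rangle\langle\beta|_{\bar B}.$$ Maps. $\mathcal G(\sigma)=V\Pi\mathcal A(\sigma)\Pi V^\dagger$, and $\mathcal Z(\sigma)=\sum_{j=0}^{N-1}(|j\rangle\langle j|_R\otimes\mathbb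 1)\sigma(|j\rangle\langle j|_R\otimes\mathbb 1)$. Relative entropy. $D(\rho\|\sigma)=\operatorname{Tr}(\rho\log_2\rho)-\operatorname{Tr}(\rho\log_2\sigma)$, used also for subnormalized positive operators. *)

From HB Require Import structures.
From Stdlib Require Import Reals Lra ClassicalEpsilon FunctionalExtensionality.
From mathcomp Require Import ssreflect ssrfun ssrbool eqtype ssrnat seq choice
  fintype finfun bigop finset.

Set Implicit Arguments.
Local Open Scope type_scope.
Unset Strict Implicit.
Unset Printing Implicit Defensive.

Local Open Scope R_scope.

Record C := mkC { Cre : R; Cim : R }.

Definition C0 : C := mkC 0 0.
Definition C1 : C := mkC 1 0.
Definition RtoC (x : R) : C := mkC x 0.
Definition Cadd (x y : C) : C := mkC (Cre x + Cre y) (Cim x + Cim y).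
Definition Copp (x : C) : C := mkC (- Cre x) (- Cim x).
Definition Cmul (x y : C) : C :=
  mkC (Cre x * Cre y - Cim x * Cim y) (Cre x * Cim y + Cim x * Cre y).
Definition Cconj (x : C) : C := mkC (Cre x) (- Cim x).

Lemma C_eq (x y : C) : Cre x = Cre y -> Cim x = Cim y -> x = y.
Proof. by case: x => ? ?; case: y => ? ? /= -> ->. Qed.

Lemma CaddA : associative Cadd.
Proof. move=> x y z; apply: C_eq => /=; ring. Qed.
Lemma CaddC : commutative Cadd.
Proof. move=> x y; apply: C_eq => /=; ring. Qed.
Lemma Cadd0l : left_id C0 Cadd.
Proof. move=> x; apply: C_eq => /=; ring. Qed.
Lemma CmulA : associative Cmul.
Proof. move=> x y z; apply: C_eq => /=; ring. Qed.
Lemma CmulC : commutative Cmul.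
Proof. move=> x y; apply: C_eq => /=; ring. Qed.
Lemma Cmul1l : left_id C1 Cmul.
Proof. move=> x; apply: C_eq => /=; ring. Qed.
Lemma Cmul0l : left_zero C0 Cmul.
Proof. move=> x; apply: C_eq => /=; ring. Qed.
Lemma Cmul0r : right_zero C0 Cmul.
Proof. move=> x; apply: C_eq => /=; ring. Qed.
Lemma CmulDl : left_distributive Cmul Cadd.
Proof. move=> x y z; apply: C_eq => /=; ring. Qed.
Lemma CmulDr : right_distributive Cmul Cadd.
Proof. move=> x y z; apply: C_eq => /=; ring. Qed.

HB.instance Definition _ := Monoid.isComLaw.Build C C0 Cadd CaddA CaddC Cadd0l.
HB.instance Definition _ := Monoid.isComLaw.Build C C1 Cmul CmulA CmulC Cmul1l.
HB.instance Definition _ := Monoid.isMulLaw.Build C C0 Cmul Cmul0l Cmul0r.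
HB.instance Definition _ := Monoid.isAddLaw.Build C Cmul Cadd CmulDl CmulDr.

Local Close Scope R_scope.

(* ---------- matrices indexed by finite types ----------
   A finite-dimensional Hilbert space is C^T for a finite type T (its
   orthonormal basis); tensor products correspond to product index types.
   [mx T U] is a linear map C^U -> C^T (rows T, columns U). *)
Definition mx (T U : finType) := T -> U -> C.

Definition mxmul (T U V : finType) (M : mx T U) (N : mx U V) : mx T V :=
  fun i k => \big[Cadd/C0]_(j : U) Cmul (M i j) (N j k).
Definition adj (T U : finType) (M : mx T U) : mx U T :=
  fun j i => Cconj (M i j).
Definition mxsum (T U I : finType) (F : I -> mx T U) : mx T U :=
  fun i j => \big[Cadd/C0]_(k : I) F k i j.
Definition idmx (T : finType) : mx T T :=
  fun i j => if i == j then C1 else C0.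
Definition mxzero (T U : finType) : mx T U := fun _ _ => C0.
Definition kron (T1 U1 T2 U2 : finType) (M : mx T1 U1) (N : mx T2 U2)
  : mx (T1 * T2) (U1 * U2) :=
  fun i j => Cmul (M i.1 j.1) (N i.2 j.2).
Definition proj (S : finType) (k : S) : mx S S :=
  fun i j => if (i == k) && (j == k) then C1 else C0.
(* M (x) |k>  (the ket is appended as the last tensor factor) *)
Definition tens_ket (T U S : finType) (M : mx T U) (k : S) : mx (T * S) U :=
  fun i j => if i.2 == k then M i.1 j else C0.
(* |k> (x) M  (the ket is prepended as the first tensor factor) *)
Definition ket_tens (S T U : finType) (k : S) (M : mx T U) : mx (S * T) U :=
  fun i j => if i.1 == k then M i.2 j else C0.
Definition trace (T : finType) (M : mx T T) : C :=
  \big[Cadd/C0]_(i : T) M i i.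
Definition diagR (T : finType) (d : T -> R) : mx T T :=
  fun i j => if i == j then RtoC (d i) else C0.

Definition applyv (T U : finType) (M : mx T U) (v : U -> C) : T -> C :=
  fun i => \big[Cadd/C0]_(j : U) Cmul (M i j) (v j).
Definition inner (T : finType) (u v : T -> C) : C :=
  \big[Cadd/C0]_(i : T) Cmul (Cconj (u i)) (v i).
Definition psd (T : finType) (M : mx T T) : Prop :=
  forall v : T -> C, (Cim (inner v (applyv M v)) = 0 /\ 0 <= Cre (inner v (applyv M v)))%R.
Definition density (T : finType) (rho : mx T T) : Prop :=
  psd rho /\ trace rho = C1.
Definition POVM (X T : finType) (P : X -> mx T T) : Prop :=
  (forall x, psd (P x)) /\ mxsum P = @idmx T.

Definition unitary (T : finType) (U : mx T T) : Prop :=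
  mxmul (adj U) U = @idmx T /\ mxmul U (adj U) = @idmx T.

Definition sqrtm (T : finType) (M : mx T T) : mx T T :=
  epsilon (inhabits (@mxzero T T)) (fun N => psd N /\ mxmul N N = M).

Definition spectral (T : finType) (M : mx T T) (p : mx T T * (T -> R)) : Prop :=
  unitary p.1 /\ M = mxmul (mxmul p.1 (diagR p.2)) (adj p.1).

(* f(M) for Hermitian M, via a chosen spectral decomposition *)
Definition funm (T : finType) (f : R -> R) (M : mx T T) : mx T T :=
  let p := epsilon (inhabits (@idmx T, fun _ : T => 0%R)) (spectral M) in
  mxmul (mxmul p.1 (diagR (fun i => f (p.2 i)))) (adj p.1).

Definition log2 (x : R) : R := (ln x / ln 2)%R.

(* log_2 taken on the support (0 on the kernel); this realizes the
   conventions 0 log 0 = 0 and the restriction of log sigma to supp sigma *)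
Definition log2m (T : finType) (M : mx T T) : mx T T :=
  funm (fun x => if Rlt_dec 0 x then log2 x else 0%R) M.

Definition kernel_incl (T : finType) (sigma rho : mx T T) : Prop :=
  forall v : T -> C, applyv sigma v = (fun _ => C0) -> applyv rho v = (fun _ => C0).

(* Relative entropy D(rho||sigma) = Tr(rho log2 rho) - Tr(rho log2 sigma),
   with value None (= +infinity) when supp rho is not contained in supp sigma. *)
Definition relent (T : finType) (rho sigma : mx T T) : option R :=
  if excluded_middle_informative (kernel_incl sigma rho) then
    Some (Cre (trace (mxmul rho (log2m rho))) - Cre (trace (mxmul rho (log2m sigma))))%R
  else None.

(* Kraus operator K^A_a : H_A -> H_A (x) A~ (x) A-bar *)
Definition KrausA (HA X SA : finType) (wA : nat) (PA : X -> mx HA HA)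
  (fA : SA -> 'I_wA -> X) (a : SA) : mx (HA * SA * 'I_wA) HA :=
  mxsum (fun al : 'I_wA => tens_ket (tens_ket (sqrtm (PA (fA a al))) a) al).

Definition KrausA' (HA X SA : finType) (wA : nat) (PA : X -> mx HA HA)
  (fA : SA -> 'I_wA -> X) (a : SA) : mx (HA * SA) HA :=
  tens_ket (sqrtm (mxsum (fun al : 'I_wA => PA (fA a al)))) a.

Definition annmap (HA HB SA SB WA WB : finType)
  (KA : SA -> mx WA HA) (KB : SB -> mx WB HB) (sigma : mx (HA * HB) (HA * HB))
  : mx (WA * WB) (WA * WB) :=
  mxsum (fun ab : SA * SB =>
    mxmul (mxmul (kron (KA ab.1) (KB ab.2)) sigma) (adj (kron (KA ab.1) (KB ab.2)))).

Definition Kept (SA SB : finType) (Kset : {set SA * SB}) : finType :=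
  {ab : SA * SB | ab \in Kset}.

(* Pi = sum_{(a,b) in K} |a><a|_{A~} (x) |b><b|_{B~} (identity elsewhere);
   projA a is |a><a|_{A~} tensored with the identity on Alice's other registers *)
Definition sift (SA SB WA WB : finType) (Kset : {set SA * SB})
  (projA : SA -> mx WA WA) (projB : SB -> mx WB WB) : mx (WA * WB) (WA * WB) :=
  mxsum (fun k : Kept Kset => kron (projA (val k).1) (projB (val k).2)).

(* V = sum_{(a,b) in K, beta} |g(a,b,f_b(beta))>_R (x) |a><a| (x) |b><b| (x) |beta><beta| *)
Definition keyiso (HB Y SA SB WA : finType) (wB N : nat) (Kset : {set SA * SB})
  (fB : SB -> 'I_wB -> Y) (g : Kept Kset -> Y -> 'I_N)
  (projA : SA -> mx WA WA) : mx ('I_N * (WA * (HB * SB * 'I_wB))) (WA * (HB * SB * 'I_wB)) :=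
  mxsum (fun kb : Kept Kset * 'I_wB =>
    ket_tens (g kb.1 (fB (val kb.1).2 kb.2))
      (kron (projA (val kb.1).1)
            (kron (kron (@idmx HB) (proj (val kb.1).2)) (proj kb.2)))).

Definition projB (HB SB : finType) (wB : nat) (b : SB) : mx (HB * SB * 'I_wB) (HB * SB * 'I_wB) :=
  kron (kron (@idmx HB) (proj b)) (@idmx 'I_wB).
Definition projA (HA SA : finType) (wA : nat) (a : SA) : mx (HA * SA * 'I_wA) (HA * SA * 'I_wA) :=
  kron (kron (@idmx HA) (proj a)) (@idmx 'I_wA).
Definition projA' (HA SA : finType) (a : SA) : mx (HA * SA) (HA * SA) :=
  kron (@idmx HA) (proj a).

Definition Gmap (HA HB X Y SA SB : finType) (wA wB N : nat)
  (PA : X -> mx HA HA) (PB : Y -> mx HB HB)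
  (fA : SA -> 'I_wA -> X) (fB : SB -> 'I_wB -> Y)
  (Kset : {set SA * SB}) (g : Kept Kset -> Y -> 'I_N)
  (sigma : mx (HA * HB) (HA * HB)) :=
  let V := keyiso (HB:=HB) fB g (@projA HA SA wA) in
  let Pi := sift Kset (@projA HA SA wA) (@projB HB SB wB) in
  mxmul (mxmul V (mxmul (mxmul Pi (annmap (KrausA PA fA) (KrausA PB fB) sigma)) Pi)) (adj V).

Definition Gmap' (HA HB X Y SA SB : finType) (wA wB N : nat)
  (PA : X -> mx HA HA) (PB : Y -> mx HB HB)
  (fA : SA -> 'I_wA -> X) (fB : SB -> 'I_wB -> Y)
  (Kset : {set SA * SB}) (g : Kept Kset -> Y -> 'I_N)
  (sigma : mx (HA * HB) (HA * HB)) :=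
  let V := keyiso (HB:=HB) fB g (@projA' HA SA) in
  let Pi := sift Kset (@projA' HA SA) (@projB HB SB wB) in
  mxmul (mxmul V (mxmul (mxmul Pi (annmap (KrausA' PA fA) (KrausA PB fB) sigma)) Pi)) (adj V).

(* pinching on the key register R *)
Definition Zmap (N : nat) (T : finType) (sigma : mx ('I_N * T) ('I_N * T))
  : mx ('I_N * T) ('I_N * T) :=
  mxsum (fun j : 'I_N =>
    mxmul (mxmul (kron (proj j) (@idmx T)) sigma) (kron (proj j) (@idmx T))).

(* Write rho = S S^dagger with S = sqrt(rho).  Then G(rho) is a Gram
   matrix X X^dagger, where X is the block row [W_ab S]_(a,b) and
   W_ab = V Pi (K^A_a (x) K^B_b); likewise G'(rho) = X' X'^dagger.  For any
   X whose rows carry the key register R, with P_j = |j><j|_R (x) 1: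
   - Tr(X X^dagger f(X X^dagger)) depends only on X^dagger X, because f may be
     replaced by a polynomial interpolating it on the (finite) spectrum and
     Tr((X X^dagger)^(k+1)) = Tr((X^dagger X)^(k+1));
   - Z(X X^dagger) = Y Y^dagger with Y = [P_j X]_j, and f(Z(X X^dagger)) is
     block diagonal in R, so Tr(X X^dagger f(Z ..)) = Tr(Y Y^dagger f(Y Y^dagger))
     depends only on Y^dagger Y, whose blocks are X^dagger P_j X;
   - the support condition of D always holds, since Z(X X^dagger) = Y Y^dagger.
   So D(X X^dagger || Z(X X^dagger)) depends only on the blocks X^dagger P_j X
   (lemma [relent_pinch_gram]).  Finally the blocks X^dagger P_j X only see
   Alice's Kraus operators through K_a^dagger K_a' = delta_aa' P^A_a, which is
   the same for K^A and K^A' (lemma [key_block_gram_eq]). *)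

From HB Require Import structures.
From Stdlib Require Import Reals Lra ClassicalEpsilon FunctionalExtensionality.
From mathcomp Require Import ssreflect ssrfun ssrbool eqtype ssrnat seq choice
  fintype finfun bigop finset.
From mathcomp Require Import ssralg ssrnum poly matrix sesquilinear spectral.
From mathcomp Require Import complex Rstruct.

Set Implicit Arguments.
Unset Strict Implicit.
Unset Printing Implicit Defensive.
Local Open Scope type_scope.

Ltac C_ring := apply: C_eq => /=; ring.

Lemma Cadd0r x : Cadd x C0 = x. Proof. C_ring. Qed.
Lemma Cmul1r x : Cmul x C1 = x. Proof. C_ring. Qed.
Lemma CconjK x : Cconj (Cconj x) = x. Proof. C_ring. Qed.
Lemma CconjD x y : Cconj (Cadd x y) = Cadd (Cconj x) (Cconj y). Proof. C_ring. Qed.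
Lemma CconjM x y : Cconj (Cmul x y) = Cmul (Cconj x) (Cconj y). Proof. C_ring. Qed.
Lemma Cconj0 : Cconj C0 = C0. Proof. C_ring. Qed.
Lemma Cconj1 : Cconj C1 = C1. Proof. C_ring. Qed.
Lemma RtoCD a b : RtoC (Rplus a b) = Cadd (RtoC a) (RtoC b). Proof. C_ring. Qed.

Lemma Cconj_sum (I : Type) (r : seq I) (P : pred I) (F : I -> C) :
  Cconj (\big[Cadd/C0]_(i <- r | P i) F i) = \big[Cadd/C0]_(i <- r | P i) Cconj (F i).
Proof. exact: (big_morph Cconj CconjD Cconj0). Qed.

Lemma RtoC_sum (I : Type) (r : seq I) (P : pred I) (F : I -> R) :
  RtoC (\big[Rplus/R0]_(i <- r | P i) F i) = \big[Cadd/C0]_(i <- r | P i) RtoC (F i).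
Proof. exact: (big_morph RtoC RtoCD). Qed.

Lemma Cre_sum (I : Type) (r : seq I) (P : pred I) (F : I -> C) :
  Cre (\big[Cadd/C0]_(i <- r | P i) F i) = \big[Rplus/R0]_(i <- r | P i) Cre (F i).
Proof. exact: (big_morph Cre). Qed.

Lemma Cim_sum (I : Type) (r : seq I) (P : pred I) (F : I -> C) :
  Cim (\big[Cadd/C0]_(i <- r | P i) F i) = \big[Rplus/R0]_(i <- r | P i) Cim (F i).
Proof. exact: (big_morph Cim). Qed.

Lemma sum_pair (I J : finType) (F : I * J -> C) :
  \big[Cadd/C0]_(p : I * J) F p = \big[Cadd/C0]_(i : I) \big[Cadd/C0]_(j : J) F (i, j).
Proof. by rewrite (pair_bigA _ (fun i j => F (i, j))); apply: eq_bigr => -[]. Qed.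

Lemma sumR_ge0 (I : finType) (P : pred I) (F : I -> R) :
  (forall i, Rle R0 (F i)) -> Rle R0 (\big[Rplus/R0]_(i | P i) F i).
Proof.
move=> h; apply: (big_ind (fun x => Rle R0 x)) => //; first exact: Rle_refl.
move=> x y hx hy; lra.
Qed.

Lemma sumR_eq0 (I : finType) (F : I -> R) :
  (forall i, Rle R0 (F i)) -> \big[Rplus/R0]_(i : I) F i = R0 -> forall i, F i = R0.
Proof.
move=> h hs i; move: hs; rewrite (bigD1 i) //= => hs.
have := @sumR_ge0 _ (fun j => j != i) _ h; have := h i; lra.
Qed.

Definition cdelta (T : eqType) (x y : T) : C := if x == y then C1 else C0.

Definition mscale (T U : finType) (c : C) (A : mx T U) : mx T U :=
  fun i j => Cmul c (A i j).

Lemma mx_ext (T U : finType) (A B : mx T U) : (forall i j, A i j = B i j) -> A = B.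
Proof.
move=> h; apply: functional_extensionality => i.
by apply: functional_extensionality => j; exact: h.
Qed.

Lemma mxsum_ext (T U I : finType) (F G : I -> mx T U) :
  (forall k, F k = G k) -> mxsum F = mxsum G.
Proof. by move=> h; apply: mx_ext => i j; apply: eq_bigr => k _; rewrite h. Qed.

Lemma mxmulA (T U V W : finType) (A : mx T U) (B : mx U V) (D : mx V W) :
  mxmul (mxmul A B) D = mxmul A (mxmul B D).
Proof.
apply: mx_ext => i l; rewrite /mxmul.
under eq_bigr => j _ do rewrite big_distrl.
rewrite exchange_big; apply: eq_bigr => k _.
by rewrite big_distrr; apply: eq_bigr => j _; exact/esym/CmulA.
Qed.

Lemma mxmul1 (T U : finType) (A : mx T U) : mxmul A (@idmx U) = A.
Proof.
apply: mx_ext => i j; rewrite /mxmul /idmx (bigD1 j) //= eqxx Cmul1r big1 ?Cadd0r //.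
by move=> k /negbTE ->; rewrite Cmul0r.
Qed.

Lemma mul1mx (T U : finType) (A : mx T U) : mxmul (@idmx T) A = A.
Proof.
apply: mx_ext => i j; rewrite /mxmul /idmx (bigD1 i) //= eqxx Cmul1l big1 ?Cadd0r //.
by move=> k; rewrite eq_sym => /negbTE ->; rewrite Cmul0l.
Qed.

Lemma mxmul0 (T U V : finType) (A : mx T U) : mxmul A (@mxzero U V) = @mxzero T V.
Proof. by apply: mx_ext => i j; rewrite /mxmul /mxzero big1 // => k _; exact: Cmul0r. Qed.

Lemma mxmul_suml (T U V I : finType) (F : I -> mx T U) (B : mx U V) :
  mxmul (mxsum F) B = mxsum (fun k => mxmul (F k) B).
Proof.
apply: mx_ext => i j; rewrite /mxmul /mxsum.
by under eq_bigr => l _ do rewrite big_distrl; rewrite exchange_big.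
Qed.

Lemma mxmul_sumr (T U V I : finType) (A : mx T U) (F : I -> mx U V) :
  mxmul A (mxsum F) = mxsum (fun k => mxmul A (F k)).
Proof.
apply: mx_ext => i j; rewrite /mxmul /mxsum.
by under eq_bigr => l _ do rewrite big_distrr; rewrite exchange_big.
Qed.

Lemma mxmul_scaler (T U V : finType) (A : mx T U) c (B : mx U V) :
  mxmul A (mscale c B) = mscale c (mxmul A B).
Proof.
apply: mx_ext => i j; rewrite /mxmul /mscale big_distrr.
by apply: eq_bigr => k _; C_ring.
Qed.

Lemma mxsum_zero (T U I : finType) : mxsum (fun _ : I => @mxzero T U) = @mxzero T U.
Proof. by apply: mx_ext => i j; rewrite /mxsum /mxzero big1. Qed.

Lemma mxsum_delta (T U I : finType) (i : I) (F : I -> mx T U) :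
  mxsum (fun j => if i == j then F j else @mxzero T U) = F i.
Proof.
apply: mx_ext => x y; rewrite /mxsum (bigD1 i) //= eqxx big1 ?Cadd0r //.
by move=> j; rewrite eq_sym => /negbTE ->.
Qed.

Lemma adjK (T U : finType) (A : mx T U) : adj (adj A) = A.
Proof. by apply: mx_ext => i j; rewrite /adj CconjK. Qed.

Lemma adj_mul (T U V : finType) (A : mx T U) (B : mx U V) :
  adj (mxmul A B) = mxmul (adj B) (adj A).
Proof.
apply: mx_ext => i j; rewrite /adj /mxmul Cconj_sum; apply: eq_bigr => k _.
by rewrite CconjM CmulC.
Qed.

Lemma adj_sum (T U I : finType) (F : I -> mx T U) :
  adj (mxsum F) = mxsum (fun k => adj (F k)).
Proof. by apply: mx_ext => i j; rewrite /adj /mxsum Cconj_sum. Qed.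

Lemma adj_id (T : finType) : adj (@idmx T) = @idmx T.
Proof.
by apply: mx_ext => i j; rewrite /adj /idmx eq_sym; case: (i == j);
  [exact: Cconj1 | exact: Cconj0].
Qed.

Lemma adj_proj (S : finType) (c : S) : adj (proj c) = proj c.
Proof. by apply: mx_ext => i j; rewrite /adj /proj andbC; case: (_ && _); C_ring. Qed.

Lemma kron_mul (T1 U1 V1 T2 U2 V2 : finType) (A : mx T1 U1) (B : mx T2 U2)
  (A' : mx U1 V1) (B' : mx U2 V2) :
  mxmul (kron A B) (kron A' B') = kron (mxmul A A') (mxmul B B').
Proof.
apply: mx_ext => i j; rewrite /mxmul /kron [RHS]big_distrlr /= pair_bigA.
by apply: eq_bigr => -[k1 k2] _ /=; C_ring.
Qed.

Lemma adj_kron (T1 U1 T2 U2 : finType) (A : mx T1 U1) (B : mx T2 U2) :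
  adj (kron A B) = kron (adj A) (adj B).
Proof. by apply: mx_ext => i j; rewrite /adj /kron CconjM. Qed.

Lemma kron_sumr (T1 U1 T2 U2 I : finType) (A : mx T1 U1) (F : I -> mx T2 U2) :
  kron A (mxsum F) = mxsum (fun k => kron A (F k)).
Proof. by apply: mx_ext => x y; rewrite /kron /mxsum big_distrr. Qed.

Lemma kron_scalel (T1 U1 T2 U2 : finType) c (A : mx T1 U1) (B : mx T2 U2) :
  kron (mscale c A) B = kron A (mscale c B).
Proof. by apply: mx_ext => x y; rewrite /kron /mscale; C_ring. Qed.

Lemma ket_tens_mul (T U V S : finType) (i : S) (M : mx T U) (B : mx U V) :
  mxmul (ket_tens i M) B = ket_tens i (mxmul M B).
Proof.
apply: mx_ext => x y; rewrite /mxmul /ket_tens; case: (x.1 == i) => //.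
by rewrite big1 // => k _; exact: Cmul0l.
Qed.

Lemma tens_ket_gram (T U V S : finType) (k k' : S) (M : mx T U) (M' : mx T V) :
  mxmul (adj (tens_ket M k)) (tens_ket M' k') =
  if k == k' then mxmul (adj M) M' else @mxzero _ _.
Proof.
apply: mx_ext => u v; rewrite /mxmul sum_pair exchange_big (bigD1 k) //=.
rewrite [X in Cadd _ X]big1 => [|s hs]; last first.
  by rewrite big1 // => t _; rewrite /adj /tens_ket /= (negbTE hs) Cconj0 Cmul0l.
rewrite Cadd0r /adj /tens_ket /= eqxx.
by case: (k == k') => //; rewrite /mxzero big1 // => t _; exact: Cmul0r.
Qed.

Lemma trace_mulC (T U : finType) (A : mx T U) (B : mx U T) :
  trace (mxmul A B) = trace (mxmul B A).
Proof.
rewrite /trace /mxmul exchange_big; apply: eq_bigr => i _.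
by apply: eq_bigr => j _; rewrite CmulC.
Qed.

Lemma trace_sum (T I : finType) (F : I -> mx T T) :
  trace (mxsum F) = \big[Cadd/C0]_(k : I) trace (F k).
Proof. by rewrite /trace /mxsum exchange_big. Qed.

Lemma trace_scale (T : finType) c (A : mx T T) : trace (mscale c A) = Cmul c (trace A).
Proof. by rewrite /trace /mscale big_distrr. Qed.

Lemma applyv_mul (T U V : finType) (A : mx T U) (B : mx U V) v :
  applyv (mxmul A B) v = applyv A (applyv B v).
Proof.
apply: functional_extensionality => i; rewrite /applyv /mxmul.
under eq_bigr => j _ do rewrite big_distrl.
rewrite exchange_big; apply: eq_bigr => k _; rewrite big_distrr.
by apply: eq_bigr => j _ /=; exact/esym/CmulA.
Qed.

Lemma applyv0 (T U : finType) (A : mx T U) : applyv A (fun _ => C0) = (fun _ => C0).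
Proof.
by apply: functional_extensionality => i; rewrite /applyv big1 // => j _; exact: Cmul0r.
Qed.

Lemma inner0 (T : finType) (u : T -> C) : inner u (fun _ => C0) = C0.
Proof. by rewrite /inner big1 // => j _; exact: Cmul0r. Qed.

Lemma inner_adj (T U : finType) (A : mx T U) u v :
  inner u (applyv A v) = inner (applyv (adj A) u) v.
Proof.
rewrite /inner /applyv.
under eq_bigr => i _ do rewrite big_distrr.
rewrite exchange_big; apply: eq_bigr => j _.
by rewrite Cconj_sum big_distrl; apply: eq_bigr => i _ /=; rewrite /adj; C_ring.
Qed.

Lemma inner_self0 (T : finType) (w : T -> C) :
  Cre (inner w w) = R0 -> w = (fun _ => C0).
Proof.
rewrite /inner Cre_sum => h; apply: functional_extensionality => i.
have : Cre (Cmul (Cconj (w i)) (w i)) = R0.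
  by apply: (sumR_eq0 _ h) => j /=; nra.
by rewrite /= => e; apply: C_eq => /=; nra.
Qed.

Lemma psd_sum (T I : finType) (F : I -> mx T T) : (forall k, psd (F k)) -> psd (mxsum F).
Proof.
move=> h v.
have -> : inner v (applyv (mxsum F) v) = \big[Cadd/C0]_(k : I) inner v (applyv (F k) v).
  rewrite /inner /applyv /mxsum.
  under eq_bigr => i _ do
    (under eq_bigr => j _ do rewrite big_distrl; rewrite -exchange_big big_distrr).
  by rewrite exchange_big.
rewrite Cim_sum Cre_sum; split; first by rewrite big1 // => k _; case: (h k v).
by apply: sumR_ge0 => k; case: (h k v).
Qed.

Definition sesq (T : finType) (M : mx T T) (u v : T -> C) : C :=
  \big[Cadd/C0]_(a : T) \big[Cadd/C0]_(b : T) Cmul (Cmul (Cconj (u a)) (M a b)) (v b).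

Definition vadd (T : finType) (u v : T -> C) := fun i => Cadd (u i) (v i).
Definition vscale (T : finType) (c : C) (u : T -> C) := fun i => Cmul c (u i).
Definition basisv (T : finType) (i : T) : T -> C := fun a => cdelta a i.

Lemma inner_sesq (T : finType) (M : mx T T) u v : inner u (applyv M v) = sesq M u v.
Proof.
rewrite /inner /sesq /applyv; apply: eq_bigr => a _; rewrite big_distrr.
by apply: eq_bigr => b _ /=; exact: CmulA.
Qed.

Lemma sesq_addl (T : finType) (M : mx T T) u1 u2 v :
  sesq M (vadd u1 u2) v = Cadd (sesq M u1 v) (sesq M u2 v).
Proof.
rewrite /sesq -big_split; apply: eq_bigr => a _; rewrite -big_split.
by apply: eq_bigr => b _ /=; rewrite /vadd; C_ring.
Qed.

Lemma sesq_addr (T : finType) (M : mx T T) u v1 v2 :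
  sesq M u (vadd v1 v2) = Cadd (sesq M u v1) (sesq M u v2).
Proof.
rewrite /sesq -big_split; apply: eq_bigr => a _; rewrite -big_split.
by apply: eq_bigr => b _ /=; rewrite /vadd; C_ring.
Qed.

Lemma sesq_scalel (T : finType) (M : mx T T) c u v :
  sesq M (vscale c u) v = Cmul (Cconj c) (sesq M u v).
Proof.
rewrite /sesq big_distrr; apply: eq_bigr => a _; rewrite big_distrr.
by apply: eq_bigr => b _ /=; rewrite /vscale; C_ring.
Qed.

Lemma sesq_scaler (T : finType) (M : mx T T) c u v :
  sesq M u (vscale c v) = Cmul c (sesq M u v).
Proof.
rewrite /sesq big_distrr; apply: eq_bigr => a _; rewrite big_distrr.
by apply: eq_bigr => b _ /=; rewrite /vscale; C_ring.
Qed.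

Lemma sesq_basis (T : finType) (M : mx T T) i j : sesq M (basisv i) (basisv j) = M i j.
Proof.
rewrite /sesq /basisv /cdelta (bigD1 i) //= [X in Cadd _ X]big1 => [|a /negbTE ->];
  last by rewrite big1 // => b _; C_ring.
rewrite Cadd0r eqxx (bigD1 j) //= eqxx big1 => [|b /negbTE ->]; last by C_ring.
by C_ring.
Qed.

(* Polarization: the imaginary parts of the quadratic form at e_i, e_j,
   e_j + e_i and e_j + sqrt(-1) e_i force M_ij to be the conjugate of M_ji. *)
Lemma psd_herm (T : finType) (M : mx T T) : psd M -> adj M = M.
Proof.
move=> h; have hq v : Cim (sesq M v v) = R0 by rewrite -inner_sesq; case: (h v).
apply: mx_ext => i j; rewrite /adj.
have h1 := hq (vadd (basisv j) (basisv i)).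
have h2 := hq (vadd (basisv j) (vscale (mkC R0 R1) (basisv i))).
have hi := hq (basisv i); have hj := hq (basisv j).
rewrite !sesq_addl !sesq_addr !sesq_scalel !sesq_scaler !sesq_basis in h1 h2 hi hj.
move: h1 h2 hi hj; case: (M i j) => a b; case: (M j i) => c d.
case: (M i i) => ? ?; case: (M j j) => ? ? /= *.
by apply: C_eq => /=; nra.
Qed.

Lemma diagR_mul (T : finType) (a b : T -> R) :
  mxmul (diagR a) (diagR b) = diagR (fun t => Rmult (a t) (b t)).
Proof.
apply: mx_ext => i j; rewrite /mxmul /diagR (bigD1 i) //= eqxx big1.
  by case: (i == j); C_ring.
by move=> k; rewrite eq_sym => /negbTE ->; C_ring.
Qed.

Lemma diagR1 (T : finType) : diagR (fun _ : T => R1) = @idmx T.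
Proof. by apply: mx_ext => i j; rewrite /diagR /idmx; case: (i == j). Qed.

Lemma mscale_diag (T : finType) r (d : T -> R) :
  mscale (RtoC r) (diagR d) = diagR (fun t => Rmult r (d t)).
Proof. by apply: mx_ext => i j; rewrite /mscale /diagR; case: (i == j); C_ring. Qed.

Lemma mxsum_diag (T I : finType) (d : I -> T -> R) :
  mxsum (fun i => diagR (d i)) = diagR (fun t => \big[Rplus/R0]_(i : I) d i t).
Proof.
apply: mx_ext => a b; rewrite /mxsum /diagR.
by case: (a == b); rewrite ?RtoC_sum // big1.
Qed.

Lemma inner_diag (T : finType) (d : T -> R) (w : T -> C) :
  inner w (applyv (diagR d) w) =
  \big[Cadd/C0]_(t : T) Cmul (RtoC (d t)) (Cmul (Cconj (w t)) (w t)).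
Proof.
rewrite /inner /applyv /diagR; apply: eq_bigr => t _.
rewrite (bigD1 t) //= eqxx big1; first by C_ring.
by move=> k; rewrite eq_sym => /negbTE ->; C_ring.
Qed.

Lemma mscale_conj (T : finType) (U D : mx T T) c :
  mscale c (mxmul (mxmul U D) (adj U)) = mxmul (mxmul U (mscale c D)) (adj U).
Proof.
apply: mx_ext => i j; rewrite /mscale /mxmul big_distrr; apply: eq_bigr => k _.
by rewrite !big_distrl big_distrr; apply: eq_bigr => l _ /=; C_ring.
Qed.

Lemma conj_mul (T : finType) (U A B : mx T T) : mxmul (adj U) U = @idmx T ->
  mxmul (mxmul (mxmul U A) (adj U)) (mxmul (mxmul U B) (adj U)) =
  mxmul (mxmul U (mxmul A B)) (adj U).
Proof. by move=> h; rewrite !mxmulA -(mxmulA (adj U) U) h mul1mx. Qed.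

Lemma psd_diag (T : finType) (U : mx T T) (d : T -> R) :
  (forall t, Rle R0 (d t)) -> psd (mxmul (mxmul U (diagR d)) (adj U)).
Proof.
move=> hd v; rewrite !applyv_mul inner_adj inner_diag Cim_sum Cre_sum.
split; first by rewrite big1 // => t _ /=; ring.
by apply: sumR_ge0 => t /=; have := hd t; nra.
Qed.

Lemma spectral_psd (T : finType) (P : mx T T) p :
  psd P -> spectral P p -> forall t, Rle R0 (p.2 t).
Proof.
move=> hP [[hU1 hU2] hdec] t.
have hD : mxmul (mxmul (adj p.1) P) p.1 = diagR p.2.
  by rewrite hdec -!mxmulA hU1 mul1mx mxmulA hU1 mxmul1.
have [_] := hP (applyv p.1 (basisv t)).
rewrite -{1}(adjK p.1) -inner_adj -!applyv_mul hD inner_diag (bigD1 t) //= big1.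
  by rewrite /basisv /cdelta eqxx /=; lra.
by move=> k hk; rewrite /basisv /cdelta (negbTE hk); C_ring.
Qed.

(* The spectral theorem for self-adjoint matrices, obtained from MathComp's
   spectral theorem for normal matrices over [complex R] by transporting
   matrices along an enumeration of the index type. *)
Section SpectralTheorem.
Import GRing.Theory Num.Theory.

Local Open Scope sesquilinear_scope.
Local Notation K := (complex R).

Let toC (k : K) : C := mkC (complex.Re k) (complex.Im k).
Let ofC (z : C) : K := Complex (Cre z) (Cim z).

Let toC_sum (I : Type) (r : seq I) (P : pred I) (F : I -> K) :
  toC (\sum_(i <- r | P i) F i)%R = \big[Cadd/C0]_(i <- r | P i) toC (F i).
Proof. by apply: (big_morph toC) => [[? ?] [? ?]|]. Qed.

Let sum_enum (T : finType) (F : T -> C) :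
  \big[Cadd/C0]_(t : T) F t = \big[Cadd/C0]_(i < #|T|) F (enum_val i).
Proof.
rewrite (reindex (@enum_val T xpredT)) //.
by exists enum_rank => i _; [exact: enum_valK | exact: enum_rankK].
Qed.

Let toM (T U : finType) (A : mx T U) : 'M[K]_(#|T|, #|U|) :=
  \matrix_(i, j) ofC (A (enum_val i) (enum_val j)).
Let ofM (T U : finType) (M : 'M[K]_(#|T|, #|U|)) : mx T U :=
  fun t u => toC (M (enum_rank t) (enum_rank u)).

Let ofMK (T U : finType) (A : mx T U) : ofM (toM A) = A.
Proof. by apply: mx_ext => t u; rewrite /ofM /toM mxE !enum_rankK; case: (A t u). Qed.

Let ofM_mul (T U V : finType) (M : 'M[K]_(#|T|, #|U|)) (M' : 'M[K]_(#|U|, #|V|)) :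
  ofM (M *m M')%R = mxmul (ofM M) (ofM M').
Proof.
apply: mx_ext => t v; rewrite /ofM /mxmul mxE toC_sum [RHS]sum_enum.
apply: eq_bigr => i _; rewrite enum_valK.
by case: (M _ _) => ? ?; case: (M' _ _) => ? ?.
Qed.

Let ofM_adj (T U : finType) (M : 'M[K]_(#|T|, #|U|)) :
  ofM (M ^t Num.conj)%R = adj (ofM M).
Proof. by apply: mx_ext => t u; rewrite /ofM /adj !mxE; case: (M _ _). Qed.

Let toM_adj (T U : finType) (A : mx T U) : toM (adj A) = ((toM A) ^t Num.conj)%R.
Proof. by apply/matrixP => i j; rewrite /toM !mxE /adj; case: (A _ _). Qed.

Let enum_rank_neq (T : finType) (t u : T) : t != u -> (enum_rank t == enum_rank u) = false.
Proof. by move=> ne; apply/negbTE; apply: contra ne => /eqP/enum_rank_inj ->. Qed.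

Let ofM_id (T : finType) : ofM (1%:M : 'M[K]_#|T|)%R = @idmx T.
Proof.
apply: mx_ext => t u; rewrite /ofM /idmx mxE.
by case: (eqVneq t u) => [->|ne]; rewrite ?eqxx ?enum_rank_neq.
Qed.

Let ofM_diag (T : finType) (sp : 'rV[K]_#|T|) :
  (forall i, complex.Im (sp ord0 i) = 0%R) ->
  ofM (diag_mx sp) = diagR (fun t => complex.Re (sp ord0 (enum_rank t))).
Proof.
move=> h; apply: mx_ext => t u; rewrite /ofM /diagR mxE.
case: (eqVneq t u) => [<-|ne]; last by rewrite enum_rank_neq // mulr0n.
by rewrite eqxx mulr1n /toC h.
Qed.

Lemma spectral_herm (T : finType) (A : mx T T) : adj A = A -> exists p, spectral A p.
Proof.
move=> hA; pose Ah := toM A.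
have hAh : (Ah ^t Num.conj)%R = Ah by rewrite /Ah -toM_adj hA.
have hn : Ah \is normalmx by rewrite qualifE hAh.
have hherm : Ah \is hermsymmx by apply/is_hermitianmxP; rewrite expr0 scale1r hAh.
have hreal := hermitian_spectral_diag_real hherm.
have hdec := orthomx_spectralP hn.
set P := spectralmx Ah in hdec; set sp := spectral_diag Ah in hdec hreal.
have him i : complex.Im (sp ord0 i) = 0%R.
  have /mxOverP /(_ ord0 i) hi := hreal.
  by have := congr1 (@complex.Re R) (RIm_real hi).
have hPu : P \is unitarymx := spectral_unitarymx Ah.
have hinv : invmx P = (P ^t Num.conj)%R by rewrite invmx_unitary.
have hPP : (P *m P ^t Num.conj = 1%:M)%R by apply/unitarymxP.
have hPP' : (P ^t Num.conj *m P = 1%:M)%R by rewrite -hinv mulVmx // unitarymx_unit.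
exists (ofM (P ^t Num.conj)%R, fun t => complex.Re (sp ord0 (enum_rank t))); split => /=.
  by rewrite /unitary -ofM_adj trmxCK -!ofM_mul hPP hPP'; split; apply: ofM_id.
by rewrite -ofM_adj trmxCK -ofM_diag // -!ofM_mul -hinv -hdec /Ah ofMK.
Qed.

End SpectralTheorem.

Lemma sqrt_exists (T : finType) (P : mx T T) : psd P -> exists M, psd M /\ mxmul M M = P.
Proof.
move=> hP; have [p hp] := spectral_herm (psd_herm hP).
have hd := spectral_psd hP hp; case: hp => [[hU1 hU2] hdec].
exists (mxmul (mxmul p.1 (diagR (fun t => sqrt (p.2 t)))) (adj p.1)); split.
  by apply: psd_diag => t; exact: sqrt_pos.
rewrite conj_mul // diagR_mul hdec; do 3 f_equal.
by apply: functional_extensionality => t; exact: sqrt_sqrt.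
Qed.

Lemma sqrtm_spec (T : finType) (P : mx T T) :
  psd P -> psd (sqrtm P) /\ mxmul (sqrtm P) (sqrtm P) = P.
Proof.
by move=> hP; exact: (epsilon_spec _ (fun M => psd M /\ mxmul M M = P) (sqrt_exists hP)).
Qed.

Lemma psd_gram_sqrtm (T : finType) (P : mx T T) :
  psd P -> P = mxmul (sqrtm P) (adj (sqrtm P)).
Proof. by move=> /sqrtm_spec [hS hSS]; rewrite psd_herm. Qed.

Lemma sqrtm_gram (T : finType) (P : mx T T) : psd P -> mxmul (adj (sqrtm P)) (sqrtm P) = P.
Proof. by move=> /sqrtm_spec [hS hSS]; rewrite psd_herm. Qed.

Section FunctionalCalculus.
Import GRing.Theory.

Definition mpow (T : finType) (M : mx T T) (k : nat) : mx T T := iter k (mxmul M) (@idmx T).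
Definition pevm (T : finType) (q : {poly R}) (M : mx T T) : mx T T :=
  mxsum (fun i : 'I_(size q) => mscale (RtoC (q`_i)%R) (mpow M i)).

Definition specp (T : finType) (M : mx T T) : mx T T * (T -> R) :=
  epsilon (inhabits (@idmx T, fun _ : T => IZR Z0)) (spectral M).

Definition evs (T : finType) (M : mx T T) : seq R := [seq (specp M).2 t | t <- enum T].

Lemma trace_pev (T : finType) (M : mx T T) q (A : mx T T) :
  trace (mxmul M (pevm q A)) =
  \big[Cadd/C0]_(i < size q) Cmul (RtoC (q`_i)%R) (trace (mxmul M (mpow A i))).
Proof.
rewrite /pevm mxmul_sumr trace_sum; apply: eq_bigr => i _.
by rewrite mxmul_scaler trace_scale.
Qed.

Lemma mpow_spec (T : finType) (U : mx T T) (d : T -> R) k : unitary U ->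
  mpow (mxmul (mxmul U (diagR d)) (adj U)) k =
  mxmul (mxmul U (diagR (fun t => d t ^+ k)%R)) (adj U).
Proof.
case=> h1 h2; elim: k => [|k IH] /=; first by rewrite diagR1 mxmul1 h2.
rewrite IH conj_mul // diagR_mul; do 3 f_equal.
by apply: functional_extensionality => t; rewrite exprS.
Qed.

Lemma pevm_spec (T : finType) (U : mx T T) (d : T -> R) (q : {poly R}) : unitary U ->
  pevm q (mxmul (mxmul U (diagR d)) (adj U)) =
  mxmul (mxmul U (diagR (fun t => q.[d t]%R))) (adj U).
Proof.
move=> hU; rewrite /pevm.
under mxsum_ext => i do rewrite mpow_spec // mscale_conj mscale_diag.
rewrite -mxmul_suml -mxmul_sumr mxsum_diag; do 3 f_equal.
by apply: functional_extensionality => t; rewrite horner_coef.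
Qed.

Lemma funm_pev (T : finType) (f : R -> R) (M : mx T T) (q : {poly R}) :
  adj M = M -> {in evs M, forall x, q.[x]%R = f x} -> funm f M = pevm q M.
Proof.
move=> hM hq; have [hU hdec] : spectral M (specp M).
  exact: (epsilon_spec _ (spectral M) (spectral_herm hM)).
rewrite /funm -/(specp M) [in RHS]hdec pevm_spec //; do 3 f_equal.
apply: functional_extensionality => t; rewrite hq //.
by apply: map_f; rewrite mem_enum.
Qed.

Lemma interp (xs : seq R) (f : R -> R) :
  exists q : {poly R}, {in xs, forall x, q.[x]%R = f x}.
Proof.
elim: xs => [|x xs [q hq]]; first by exists 0%R.
case: (boolP (x \in xs)) => hx.
  by exists q => y; rewrite inE => /orP [/eqP ->|]; exact: hq.
pose w := (\prod_(z <- xs) ('X - z%:P))%R.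
have hw z : z \in xs -> w.[z]%R = 0%R by move=> hz; apply/rootP; rewrite root_prod_XsubC.
have hwx : w.[x]%R != 0%R by rewrite -/(root w x) root_prod_XsubC.
exists (q + ((f x - q.[x]) / w.[x]) *: w)%R => y; rewrite inE => /orP [/eqP ->|hy].
  by rewrite hornerD hornerZ divfK // addrC subrK.
by rewrite hornerD hornerZ (hw y hy) mulr0 addr0 hq.
Qed.

End FunctionalCalculus.

Definition log2_supp (x : R) : R := if Rlt_dec R0 x then log2 x else R0.

Lemma relent_pev (T : finType) (rho sigma : mx T T) (q : {poly R}) :
  adj rho = rho -> adj sigma = sigma -> kernel_incl sigma rho ->
  {in evs rho ++ evs sigma, forall x, q.[x]%R = log2_supp x} ->
  relent rho sigma =
  Some (Rminus (Cre (trace (mxmul rho (pevm q rho))))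
               (Cre (trace (mxmul rho (pevm q sigma))))).
Proof.
move=> hr hs hk hq; rewrite /relent /log2m.
case: excluded_middle_informative => //= _.
by rewrite -/log2_supp !(funm_pev (q := q)) // => x hx; apply: hq; rewrite mem_cat hx ?orbT.
Qed.

Lemma adj_gram (T U : finType) (X : mx T U) : adj (mxmul X (adj X)) = mxmul X (adj X).
Proof. by rewrite adj_mul adjK. Qed.

Lemma mpow_gram (T S : finType) (X : mx T S) k :
  mxmul (mpow (mxmul X (adj X)) k) X = mxmul X (mpow (mxmul (adj X) X) k).
Proof.
elim: k => [|k IH] /=; first by rewrite mul1mx mxmul1.
by rewrite mxmulA IH -!mxmulA.
Qed.

Lemma trace_pev_gram (T1 T2 S : finType) (X1 : mx T1 S) (X2 : mx T2 S) q :
  mxmul (adj X1) X1 = mxmul (adj X2) X2 ->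
  trace (mxmul (mxmul X1 (adj X1)) (pevm q (mxmul X1 (adj X1)))) =
  trace (mxmul (mxmul X2 (adj X2)) (pevm q (mxmul X2 (adj X2)))).
Proof.
have trace_gram (T : finType) (X : mx T S) k :
    trace (mxmul (mxmul X (adj X)) (mpow (mxmul X (adj X)) k)) =
    trace (mpow (mxmul (adj X) X) k.+1).
  by rewrite mxmulA trace_mulC mxmulA mpow_gram /= -mxmulA.
by move=> h; rewrite !trace_pev; apply: eq_bigr => i _; rewrite !trace_gram h.
Qed.

(* Block rows: [blk F] places the matrices F i side by side. *)
Definition blk (I T U : finType) (F : I -> mx T U) : mx T (U * I) :=
  fun t ui => F ui.2 t ui.1.

Lemma blk_gram (I T U : finType) (F : I -> mx T U) :
  mxmul (blk F) (adj (blk F)) = mxsum (fun i => mxmul (F i) (adj (F i))).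
Proof.
apply: mx_ext => t t'; rewrite /mxmul /mxsum /blk /adj.
rewrite -(pair_big xpredT xpredT (fun u i => Cmul (F i t u) (Cconj (F i t' u)))) /=.
exact: exchange_big.
Qed.

Lemma blk_adj_mul (I T U J V : finType) (F : I -> mx T U) (G : J -> mx T V) ui vj :
  mxmul (adj (blk F)) (blk G) ui vj = mxmul (adj (F ui.2)) (G vj.2) ui.1 vj.1.
Proof. by []. Qed.

Section Pinching.
Variables (N : nat) (T : finType).

Definition Pj (j : 'I_N) : mx ('I_N * T) ('I_N * T) := kron (proj j) (@idmx T).

Definition keydiag (W : mx ('I_N * T) ('I_N * T)) := forall x y, x.1 != y.1 -> W x y = C0.

Lemma adj_Pj j : adj (Pj j) = Pj j.
Proof. by rewrite /Pj adj_kron adj_proj adj_id. Qed.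

Lemma Pj_mul_entry (U : finType) j (A : mx ('I_N * T) U) x y :
  mxmul (Pj j) A x y = if x.1 == j then A x y else C0.
Proof.
rewrite /mxmul /Pj /kron /proj /idmx (bigD1 x) //= !eqxx andbb big1.
  by case: (x.1 == j); C_ring.
move=> z hz; case hx: (x.1 == j) => /=; last by C_ring.
case: eqP => [h1|_]; last by C_ring.
case: eqP => [h2|_]; last by C_ring.
by move: hz; rewrite (surjective_pairing x) (surjective_pairing z) h1 h2 (eqP hx) eqxx.
Qed.

Lemma mul_Pj_entry (U : finType) j (A : mx U ('I_N * T)) x y :
  mxmul A (Pj j) x y = if y.1 == j then A x y else C0.
Proof.
have -> : mxmul A (Pj j) = adj (mxmul (Pj j) (adj A)) by rewrite adj_mul adj_Pj adjK.
by rewrite /adj Pj_mul_entry /=; case: (y.1 == j); [exact: CconjK | exact: Cconj0].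
Qed.

Lemma Zmap_entry (M : mx ('I_N * T) ('I_N * T)) x y :
  Zmap M x y = if x.1 == y.1 then M x y else C0.
Proof.
rewrite /Zmap /mxsum.
under eq_bigr => k _ do rewrite -/(Pj k) mul_Pj_entry Pj_mul_entry.
rewrite (bigD1 x.1) //= eqxx big1 => [|k /negbTE]; first by rewrite Cadd0r eq_sym.
by rewrite eq_sym => ->; case: (y.1 == k).
Qed.

Lemma sum_Pj (U : finType) (A : mx ('I_N * T) U) : mxsum (fun j => mxmul (Pj j) A) = A.
Proof.
apply: mx_ext => x s; rewrite /mxsum.
under eq_bigr => k _ do rewrite Pj_mul_entry.
rewrite (bigD1 x.1) //= eqxx big1 ?Cadd0r // => k /negbTE.
by rewrite eq_sym => ->.
Qed.

Lemma Pj_gram (U : finType) j k (A : mx ('I_N * T) U) :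
  mxmul (adj (mxmul (Pj j) A)) (mxmul (Pj k) A) =
  if j == k then mxmul (adj A) (mxmul (Pj j) A) else @mxzero _ _.
Proof.
have PjPj : mxmul (Pj j) (mxmul (Pj k) A) =
    if j == k then mxmul (Pj j) A else @mxzero _ _.
  apply: mx_ext => x s; case: (eqVneq j k) => [<-|ne].
    by rewrite !Pj_mul_entry; case: (x.1 == j).
  rewrite !Pj_mul_entry /mxzero.
  by case: (eqVneq x.1 j) => [e|//]; rewrite -e in ne; rewrite (negbTE ne).
by rewrite adj_mul adj_Pj mxmulA PjPj; case: (j == k) => //; exact: mxmul0.
Qed.

Lemma keydiag_Zmap M : keydiag (Zmap M).
Proof. by move=> x y /negbTE h; rewrite Zmap_entry h. Qed.

Lemma keydiag_pev (W : mx ('I_N * T) ('I_N * T)) q : keydiag W -> keydiag (pevm q W).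
Proof.
have keydiag_mul A B : keydiag A -> keydiag B -> keydiag (mxmul A B).
  move=> hA hB x y hxy; rewrite /mxmul big1 // => z _.
  case: (eqVneq x.1 z.1) => e; last by rewrite hA ?Cmul0l.
  by rewrite hB ?Cmul0r // -e.
have keydiag_pow A k : keydiag A -> keydiag (mpow A k).
  move=> hA; elim: k => [|k IH] /=; last exact: keydiag_mul.
  by move=> x y h; rewrite /idmx; case: eqP => // e; rewrite e eqxx in h.
move=> hW x y hxy; rewrite /pevm /mxsum big1 // => i _.
by rewrite /mscale keydiag_pow // Cmul0r.
Qed.

Lemma trace_pinch (M W : mx ('I_N * T) ('I_N * T)) :
  keydiag W -> trace (mxmul (Zmap M) W) = trace (mxmul M W).
Proof.
move=> hW; rewrite /trace /mxmul; apply: eq_bigr => x _; apply: eq_bigr => z _.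
rewrite Zmap_entry; case: eqP => // /eqP e.
by rewrite hW 1?eq_sym //; C_ring.
Qed.

Lemma ket_tens_key_block (U V : finType) (i i' j : 'I_N) (M : mx T U) (M' : mx T V) :
  mxmul (adj (ket_tens i M)) (mxmul (Pj j) (ket_tens i' M')) =
  if (i == j) && (i' == j) then mxmul (adj M) M' else @mxzero _ _.
Proof.
have -> : mxmul (Pj j) (ket_tens i' M') =
    fun x y => if (x.1 == j) && (x.1 == i') then M' x.2 y else C0.
  by apply: mx_ext => x y; rewrite Pj_mul_entry /ket_tens; case: (x.1 == j).
apply: mx_ext => u v; rewrite /mxmul sum_pair (bigD1 i) //= [X in Cadd _ X]big1.
  rewrite Cadd0r /adj /ket_tens /= eqxx.
  case: (eqVneq i j) => [<-|ne] /=; first rewrite eq_sym; case: (i' == i) => //=;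
    by rewrite /mxzero big1 // => t _; exact: Cmul0r.
move=> r hr; rewrite big1 // => t _; rewrite /adj /ket_tens /= (negbTE hr).
by rewrite Cconj0 Cmul0l.
Qed.

Definition keyblk (U : finType) (X : mx ('I_N * T) U) := blk (fun j => mxmul (Pj j) X).

Lemma Zmap_gram (U : finType) (X : mx ('I_N * T) U) :
  Zmap (mxmul X (adj X)) = mxmul (keyblk X) (adj (keyblk X)).
Proof.
rewrite /keyblk blk_gram /Zmap; apply: mxsum_ext => j.
by rewrite adj_mul -/(Pj j) adj_Pj !mxmulA.
Qed.

(* Z(XX^dagger) v = 0 forces X^dagger v = 0: supp XX^dagger is inside supp Z(XX^dagger). *)
Lemma kernel_gram (U : finType) (X : mx ('I_N * T) U) :
  kernel_incl (Zmap (mxmul X (adj X))) (mxmul X (adj X)).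
Proof.
move=> v; rewrite Zmap_gram => hv.
have hY : applyv (adj (keyblk X)) v = (fun _ => C0).
  by apply: inner_self0; rewrite -inner_adj -applyv_mul hv inner0.
have hX : applyv (adj X) v = (fun _ => C0).
  apply: functional_extensionality => s; rewrite /applyv.
  under eq_bigr => t _ do
    rewrite /adj -[X t s](congr1 (fun A => A t s) (sum_Pj X)) /mxsum Cconj_sum big_distrl.
  rewrite exchange_big big1 // => j _.
  exact: (congr1 (fun f => f (s, j)) hY).
by rewrite applyv_mul hX applyv0.
Qed.

End Pinching.

Lemma relent_pinch_gram (N : nat) (T1 T2 S : finType) (X1 : mx ('I_N * T1) S)
  (X2 : mx ('I_N * T2) S) :
  (forall j, mxmul (adj X1) (mxmul (Pj j) X1) = mxmul (adj X2) (mxmul (Pj j) X2)) ->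
  relent (mxmul X1 (adj X1)) (Zmap (mxmul X1 (adj X1))) =
  relent (mxmul X2 (adj X2)) (Zmap (mxmul X2 (adj X2))).
Proof.
move=> hblocks.
(* X^dagger X and the Gram matrix of [P_j X]_j are assembled from the key blocks. *)
have gram_split (T : finType) (X : mx ('I_N * T) S) :
    mxmul (adj X) X = mxsum (fun j => mxmul (adj X) (mxmul (Pj j) X)).
  by rewrite -mxmul_sumr sum_Pj.
have hX : mxmul (adj X1) X1 = mxmul (adj X2) X2.
  by rewrite !gram_split; apply: mxsum_ext.
have hY : mxmul (adj (keyblk X1)) (keyblk X1) = mxmul (adj (keyblk X2)) (keyblk X2).
  by apply: mx_ext => ui vj; rewrite /keyblk !blk_adj_mul !Pj_gram;
    case: (ui.2 == vj.2); rewrite ?hblocks.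
(* One polynomial interpolates log on all four spectra involved. *)
have [q hq] := interp ((evs (mxmul X1 (adj X1)) ++ evs (Zmap (mxmul X1 (adj X1)))) ++
  (evs (mxmul X2 (adj X2)) ++ evs (Zmap (mxmul X2 (adj X2))))) log2_supp.
have hZ (T : finType) (X : mx ('I_N * T) S) :
    adj (Zmap (mxmul X (adj X))) = Zmap (mxmul X (adj X)).
  by rewrite Zmap_gram adj_gram.
rewrite !(relent_pev (q := q) _ _ (@kernel_gram _ _ _ _)) ?adj_gram ?hZ //; last 2 first.
- by move=> x hx; apply: hq; rewrite mem_cat hx ?orbT.
- by move=> x hx; apply: hq; rewrite mem_cat hx ?orbT.
have pinch (T : finType) (X : mx ('I_N * T) S) :
    trace (mxmul (mxmul X (adj X)) (pevm q (Zmap (mxmul X (adj X))))) =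
    trace (mxmul (mxmul (keyblk X) (adj (keyblk X)))
                 (pevm q (mxmul (keyblk X) (adj (keyblk X))))).
  by rewrite -(trace_pinch _ (keydiag_pev q (keydiag_Zmap _))) Zmap_gram.
by rewrite (trace_pev_gram _ hX) !pinch (trace_pev_gram _ hY).
Qed.

(* G and G' differ only in Alice's Kraus family (K^A_a on H_A (x) A~ (x) A-bar,
   or K^A'_a on H_A (x) A~) and the matching announcement projectors on
   Alice's side.  We treat both at once through such a pair (pA, KA). *)
Section PostprocessingStructure.
Variables (HA HB Y SA SB : finType) (wB N : nat) (PB : Y -> mx HB HB)
  (fB : SB -> 'I_wB -> Y) (Kset : {set SA * SB}) (g : Kept Kset -> Y -> 'I_N).

Local Notation KB b := (KrausA PB fB b).

Definition bob_key_proj (kb : Kept Kset * 'I_wB) : mx (HB * SB * 'I_wB) (HB * SB * 'I_wB) :=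
  kron (kron (@idmx HB) (proj (val kb.1).2)) (proj kb.2).

Definition key_of (kb : Kept Kset * 'I_wB) : 'I_N := g kb.1 (fB (val kb.1).2 kb.2).

(* Bob's side of V Pi (K_a (x) K_b), restricted to Alice's announcement a. *)
Definition bob_sifted (a : SA) (b : SB) :=
  mxsum (fun k : Kept Kset =>
    mscale (cdelta (val k).1 a) (mxmul (@projB HB SB wB (val k).2) (KB b))).
Definition bob_keyed (a : SA) (b : SB) (kb : Kept Kset * 'I_wB) :=
  mscale (cdelta (val kb.1).1 a) (mxmul (bob_key_proj kb) (bob_sifted a b)).

Section AliceFamily.
Variables (WA : finType) (pA : SA -> mx WA WA) (KA : SA -> mx WA HA).

Hypothesis pA_KA : forall c a, mxmul (pA c) (KA a) = mscale (cdelta c a) (KA a).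

Definition Wab (a : SA) (b : SB) :=
  mxmul (keyiso (HB:=HB) fB g pA) (mxmul (sift Kset pA (@projB HB SB wB)) (kron (KA a) (KB b))).

Lemma Wab_expand a b :
  Wab a b = mxsum (fun kb => ket_tens (key_of kb) (kron (KA a) (bob_keyed a b kb))).
Proof.
rewrite /Wab /sift mxmul_suml.
under mxsum_ext => k do rewrite kron_mul pA_KA kron_scalel.
rewrite -kron_sumr /keyiso mxmul_suml; apply: mxsum_ext => kb.
by rewrite ket_tens_mul kron_mul pA_KA kron_scalel.
Qed.

(* The key blocks of the W_ab only involve Alice through K_a^dagger K_a'. *)
Lemma Wab_key_block a b a' b' j :
  mxmul (adj (Wab a b)) (mxmul (Pj j) (Wab a' b')) =
  mxsum (fun kb => mxsum (fun kb' =>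
    if (key_of kb == j) && (key_of kb' == j) then
      kron (mxmul (adj (KA a)) (KA a')) (mxmul (adj (bob_keyed a b kb)) (bob_keyed a' b' kb'))
    else @mxzero _ _)).
Proof.
rewrite !Wab_expand // adj_sum mxmul_suml; apply: mxsum_ext => kb.
rewrite (mxmul_sumr (Pj j)) mxmul_sumr; apply: mxsum_ext => kb'.
by rewrite ket_tens_key_block -kron_mul -adj_kron.
Qed.

(* The postprocessing map built from (pA, KA); G and G' are instances. *)
Definition Ggen (sigma : mx (HA * HB) (HA * HB)) :=
  let V := keyiso (HB:=HB) fB g pA in
  let Pi := sift Kset pA (@projB HB SB wB) in
  mxmul (mxmul V (mxmul (mxmul Pi (annmap KA (fun b => KB b) sigma)) Pi)) (adj V).

Definition Gfactor (Sq : mx (HA * HB) (HA * HB)) :=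
  blk (fun ab : SA * SB => mxmul (Wab ab.1 ab.2) Sq).

Lemma Ggen_gram (Sq : mx (HA * HB) (HA * HB)) :
  (forall c, adj (pA c) = pA c) ->
  Ggen (mxmul Sq (adj Sq)) = mxmul (Gfactor Sq) (adj (Gfactor Sq)).
Proof.
move=> hpA; have hPi : adj (sift Kset pA (@projB HB SB wB)) = sift Kset pA (@projB HB SB wB).
  rewrite /sift adj_sum; apply: mxsum_ext => k.
  by rewrite adj_kron hpA /projB !adj_kron !adj_id adj_proj.
rewrite /Gfactor blk_gram /Ggen /annmap /=.
set Pi := sift Kset pA _; set V := keyiso fB g pA.
rewrite (mxmul_sumr Pi) (mxmul_suml _ Pi) (mxmul_sumr V) (mxmul_suml _ (adj V)).
by apply: mxsum_ext => ab; rewrite /Wab !adj_mul hPi !mxmulA.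
Qed.

End AliceFamily.

Lemma key_block_gram_eq (WA1 WA2 : finType) (pA1 : SA -> mx WA1 WA1) (KA1 : SA -> mx WA1 HA)
  (pA2 : SA -> mx WA2 WA2) (KA2 : SA -> mx WA2 HA) (Sq : mx (HA * HB) (HA * HB)) j :
  (forall c a, mxmul (pA1 c) (KA1 a) = mscale (cdelta c a) (KA1 a)) ->
  (forall c a, mxmul (pA2 c) (KA2 a) = mscale (cdelta c a) (KA2 a)) ->
  (forall a a', mxmul (adj (KA1 a)) (KA1 a') = mxmul (adj (KA2 a)) (KA2 a')) ->
  mxmul (adj (Gfactor pA1 KA1 Sq)) (mxmul (Pj j) (Gfactor pA1 KA1 Sq)) =
  mxmul (adj (Gfactor pA2 KA2 Sq)) (mxmul (Pj j) (Gfactor pA2 KA2 Sq)).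
Proof.
move=> h1 h2 hgram.
have Pj_blk (I : finType) (F : I -> mx _ (HA * HB)) :
    mxmul (Pj j) (blk F) = blk (fun i => mxmul (Pj j) (F i)).
  by apply: mx_ext => x y; rewrite /blk !Pj_mul_entry.
have sandwich (W : mx _ (HA * HB)) P (W' : mx _ (HA * HB)) :
    mxmul (adj (mxmul W Sq)) (mxmul P (mxmul W' Sq)) =
    mxmul (adj Sq) (mxmul (mxmul (adj W) (mxmul P W')) Sq).
  by rewrite adj_mul !mxmulA.
apply: mx_ext => x y; rewrite /Gfactor !Pj_blk !blk_adj_mul !sandwich.
rewrite (Wab_key_block h1) (Wab_key_block h2).
by under mxsum_ext => kb do under mxsum_ext => kb' do rewrite hgram.
Qed.

End PostprocessingStructure.

Lemma select_label (Z U S : finType) (lbl : Z -> S) (c a : S) (M PM : mx Z U) :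
  (forall x u, PM x u = if lbl x == c then M x u else C0) ->
  (forall x u, lbl x != a -> M x u = C0) -> PM = mscale (cdelta c a) M.
Proof.
move=> hP hM; apply: mx_ext => x u; rewrite hP /mscale /cdelta.
case: (eqVneq (lbl x) a) => [<-|ne]; last by rewrite hM // if_same Cmul0r.
by rewrite eq_sym; case: (c == lbl x); C_ring.
Qed.

Section AliceKraus.
Variables (H X S : finType) (w : nat) (P : X -> mx H H) (f : S -> 'I_w -> X).

Lemma projA_mul_entry (U : finType) c (M : mx (H * S * 'I_w) U) x u :
  mxmul (@projA H S w c) M x u = if x.1.2 == c then M x u else C0.
Proof.
rewrite /mxmul /projA /kron /proj /idmx /= (bigD1 x) //= !eqxx andbb big1.
  by case: (x.1.2 == c); C_ring.
move=> y hy.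
case: (eqVneq x.1.1 y.1.1) => e1; last by C_ring.
case: (eqVneq x.2 y.2) => e2; last by C_ring.
case: (eqVneq x.1.2 c) => e3 /=; last by C_ring.
case: (eqVneq y.1.2 c) => e4 /=; last by C_ring.
move: hy; case: x e1 e2 e3 => [[? ?] ?]; case: y e4 => [[? ?] ?] /= -> -> -> ->.
by rewrite eqxx.
Qed.

Lemma projA'_mul_entry (U : finType) c (M : mx (H * S) U) x u :
  mxmul (@projA' H S c) M x u = if x.2 == c then M x u else C0.
Proof.
rewrite /mxmul /projA' /kron /proj /idmx /= (bigD1 x) //= !eqxx andbb big1.
  by case: (x.2 == c); C_ring.
move=> y hy.
case: (eqVneq x.1 y.1) => e1; last by C_ring.
case: (eqVneq x.2 c) => e3 /=; last by C_ring.
case: (eqVneq y.2 c) => e4 /=; last by C_ring.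
move: hy; case: x e1 e3 => [? ?]; case: y e4 => [? ?] /= -> -> ->.
by rewrite eqxx.
Qed.

Lemma projA_selects c a :
  mxmul (@projA H S w c) (KrausA P f a) = mscale (cdelta c a) (KrausA P f a).
Proof.
apply: (select_label (lbl := fun x => x.1.2)) => [x u|x u hx]; first exact: projA_mul_entry.
rewrite /KrausA /mxsum big1 // => al _; rewrite /tens_ket.
by case: (x.2 == al) => //; rewrite (negbTE hx).
Qed.

Lemma projA'_selects c a :
  mxmul (@projA' H S c) (KrausA' P f a) = mscale (cdelta c a) (KrausA' P f a).
Proof.
apply: (select_label (lbl := fun x => x.2)) => [x u|x u hx]; first exact: projA'_mul_entry.
by rewrite /KrausA' /tens_ket (negbTE hx).
Qed.

Lemma adj_projA c : adj (@projA H S w c) = @projA H S w c.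
Proof. by rewrite /projA !adj_kron !adj_id adj_proj. Qed.

Lemma adj_projA' c : adj (@projA' H S c) = @projA' H S c.
Proof. by rewrite /projA' adj_kron adj_id adj_proj. Qed.

(* The POVM element of announcement a, and the common Gram data
   K_a^dagger K_a' = delta_aa' P^A_a of both families. *)
Definition announce_gram (a a' : S) :=
  if a == a' then mxsum (fun al : 'I_w => P (f a al)) else @mxzero H H.

Hypothesis P_psd : forall x, psd (P x).

Lemma KrausA_gram a a' : mxmul (adj (KrausA P f a)) (KrausA P f a') = announce_gram a a'.
Proof.
rewrite /KrausA adj_sum mxmul_suml.
under mxsum_ext => al do rewrite mxmul_sumr.
under mxsum_ext => al do under mxsum_ext => al' do rewrite !tens_ket_gram.
rewrite /announce_gram; case: (eqVneq a a') => [<-|ne].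
  apply: mxsum_ext => al.
  by rewrite (mxsum_delta al (fun al' => mxmul (adj (sqrtm (P (f a al)))) (sqrtm (P (f a al'))))) sqrtm_gram.
under mxsum_ext => al do under mxsum_ext => al' do rewrite if_same.
by under mxsum_ext => al do rewrite mxsum_zero; rewrite mxsum_zero.
Qed.

Lemma KrausA'_gram a a' : mxmul (adj (KrausA' P f a)) (KrausA' P f a') = announce_gram a a'.
Proof.
rewrite /KrausA' tens_ket_gram /announce_gram; case: (eqVneq a a') => [<-|//].
by apply: sqrtm_gram; exact: psd_sum.
Qed.

End AliceKraus.

Theorem mainTheorem2 (HA HB X Y SA SB : finType) (wA wB N : nat)
  (PA : X -> mx HA HA) (PB : Y -> mx HB HB)
  (hPA : POVM PA) (hPB : POVM PB)
  (fA : SA -> 'I_wA -> X) (fB : SB -> 'I_wB -> Y)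
  (hfA : bijective (fun p : (SA * 'I_wA)%type => fA p.1 p.2))
  (hfB : bijective (fun p : (SB * 'I_wB)%type => fB p.1 p.2))
  (Kset : {set (SA * SB)%type}) (g : Kept Kset -> Y -> 'I_N)
  (rho : mx (HA * HB)%type (HA * HB)%type) (hrho : density rho) :
  relent (Gmap PA PB fA fB g rho) (Zmap (Gmap PA PB fA fB g rho))
  = relent (Gmap' PA PB fA fB g rho) (Zmap (Gmap' PA PB fA fB g rho)).
Proof.
have [hPA_psd _] := hPA; have [hrho_psd _] := hrho.
have hG : Gmap PA PB fA fB g rho =
    mxmul (Gfactor PB fB g (@projA HA SA wA) (KrausA PA fA) (sqrtm rho))
          (adj (Gfactor PB fB g (@projA HA SA wA) (KrausA PA fA) (sqrtm rho))).
  by rewrite [in LHS](psd_gram_sqrtm hrho_psd); apply: Ggen_gram; exact: adj_projA.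
have hG' : Gmap' PA PB fA fB g rho =
    mxmul (Gfactor PB fB g (@projA' HA SA) (KrausA' PA fA) (sqrtm rho))
          (adj (Gfactor PB fB g (@projA' HA SA) (KrausA' PA fA) (sqrtm rho))).
  by rewrite [in LHS](psd_gram_sqrtm hrho_psd); apply: Ggen_gram; exact: adj_projA'.
rewrite hG hG'; apply: relent_pinch_gram => j; apply: key_block_gram_eq.
- exact: projA_selects.
- exact: projA'_selects.
- by move=> a a'; rewrite KrausA_gram // KrausA'_gram.
Qed.
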